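(* For every positive integer $k$, there exist a finite simple undirected graph $G$ and an orientation $\vec{G}$ of $G$ such that $\operatorname{adim}(G)\geq\operatorname{bdim}(G)=2^k+k-1$ and $k\geq\operatorname{adim}(\vec{G})\geq\operatorname{bdim}(\vec{G})$.
   Context: An orientation of $G$ is a directed graph obtained by assigning a direction to each edge of $G$. In an undirected graph, $d(u,v)$ is the shortest-path distance; in a directed graph, $d(u,v)$ is the length of a shortest directed path from $u$ to $v$; in both cases $d(u,v)=\infty$ if no such path exists. For a nonnegative integer $k$, $d_k(u,v)=\min(d(u,v),k+1)$. A function $f:V\to\mathbb{Z}_{\geq 0}$ is a resolving broadcast if for any distinct vertices $x,y$ there is $z$ with $f(z)>0$ and $d_{f(z)}(z,x)\neq d_{f(z)}(z,y)$. The broadcast dimension $\operatorname{bdim}$ is the minimum of $\sum_v f(v)$ over resolving broadcasts $f$. A set $A$ of vertices is an adjacency resolving set if for any distinct $x,y$ there is $z\in A$ with $d_1(z,x)\neq d_1(z,y)$; the adjacency dimension $\operatorname{adim}$ is the minimum cardinality of such a set. *)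

From mathcomp Require Import all_boot.
Set Implicit Arguments. Unset Strict Implicit. Unset Printing Implicit Defensive.

(* A graph (undirected or directed) on a finite vertex type T is given by
   its (arc) relation r : rel T; for an undirected graph r is symmetric.   *)

Definition simple_graph (T : finType) (e : rel T) : Prop :=
  symmetric e /\ irreflexive e.

Definition is_orientation (T : finType) (e o : rel T) : Prop :=
  [/\ forall x y, o x y -> e x y,
      forall x y, e x y -> o x y || o y x &
      forall x y, o x y -> ~~ o y x].

(* ball r m u = set of vertices v reachable from u by an r-walk
   (directed along r) of length at most m. *)
Definition ball (T : finType) (r : rel T) (m : nat) (u : T) : {set T} :=
  iter m (fun S => S :|: [set y | [exists x in S, r x y]]) [set u].

(* d_k(u,v) = min(d(u,v), k+1), where d is the (directed) shortest-path
   distance along r (infinite if unreachable): the least m <= k with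
   v in ball r m u, and k+1 if there is none. *)
Definition dk (T : finType) (r : rel T) (k : nat) (u v : T) : nat :=
  find (fun m => v \in ball r m u) (iota 0 k.+1).

Definition resolving_broadcast (T : finType) (r : rel T) (f : {ffun T -> nat}) : Prop :=
  forall x y : T, x != y -> exists z : T, 0 < f z /\ dk r (f z) z x != dk r (f z) z y.

Definition broadcast_cost (T : finType) (f : {ffun T -> nat}) : nat :=
  \sum_(v : T) f v.

Definition is_bdim (T : finType) (r : rel T) (n : nat) : Prop :=
  (exists f, resolving_broadcast r f /\ broadcast_cost f = n) /\
  (forall f, resolving_broadcast r f -> n <= broadcast_cost f).

Definition adjacency_resolving (T : finType) (r : rel T) (A : {set T}) : Prop :=
  forall x y : T, x != y -> exists2 z, z \in A & dk r 1 z x != dk r 1 z y.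

Definition is_adim (T : finType) (r : rel T) (n : nat) : Prop :=
  (exists A, adjacency_resolving r A /\ #|A| = n) /\
  (forall A, adjacency_resolving r A -> n <= #|A|).

(** Take the complete graph on V = [k] ⊔ 2^[k]. A resolving broadcast on it
    may leave at most one vertex silent, since any broadcasting vertex sees two
    silent ones both at distance 1; so bdim = |V| - 1 = 2^k + k - 1, and
    adim >= bdim holds in every graph (broadcast 1 from an adjacency resolving
    set). Now orient it with i -> X iff i ∈ X for i ∈ [k], X ⊆ [k], and with
    [k] and 2^[k] each ordered linearly. Then [k] is an adjacency resolving
    set of the tournament: a vertex i ∈ [k] is told apart from everything else by d_1 = 0,
    and two subsets X ≠ U by an element i of their symmetric difference, which
    sees one of them at d_1 = 1 and the other at d_1 = 2. *)

From mathcomp Require Import all_boot.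
From Stdlib Require Import Classical Wf_nat.

Set Implicit Arguments. Unset Strict Implicit. Unset Printing Implicit Defensive.

Section TruncatedDistance.
Variables (T : finType) (r : rel T).

Lemma mem_ball1 u v : (v \in ball r 1 u) = (v == u) || r u v.
Proof.
rewrite /ball /= in_setU in_set1 in_set; congr orb.
apply/existsP/idP => [[x /andP[/set1P -> //]] | ruv].
by exists u; rewrite in_set1 eqxx.
Qed.

Lemma dk_id m u : dk r m u u = 0.
Proof. by rewrite /dk /= /ball /= in_set1 eqxx. Qed.

Lemma dk_adj n u v : v != u -> r u v -> dk r n.+1 u v = 1.
Proof. by move=> vu ruv; rewrite /dk /= in_set1 (negbTE vu) mem_ball1 ruv orbT. Qed.

Lemma dk1E u v : dk r 1 u v = if v == u then 0 else if r u v then 1 else 2.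
Proof.
rewrite /dk /= in_set1 mem_ball1.
by case: (v == u); case: (r u v).
Qed.

Lemma dk1_id_neq u v : u != v -> dk r 1 u u != dk r 1 u v.
Proof. by rewrite !dk1E eqxx eq_sym => /negbTE ->; case: (r u v). Qed.

End TruncatedDistance.

Lemma ex_least_nat (P : nat -> Prop) :
  (exists n, P n) -> exists n, P n /\ forall m, P m -> n <= m.
Proof.
move=> exP; have [n [[Pn n_min] _]] :=
  dec_inh_nat_subset_has_unique_least_element P (fun n => classic (P n)) exP.
by exists n; split => // m Pm; apply/leP/n_min.
Qed.

Lemma ex_min_cost (X : Type) (P : X -> Prop) (cost : X -> nat) :
  (exists x, P x) ->
  exists n, (exists x, P x /\ cost x = n) /\ (forall x, P x -> n <= cost x).
Proof.
move=> [x Px].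
have [_ [[y [Py <-]] y_min]] :=
  ex_least_nat (P := fun n => exists y, P y /\ cost y = n) (ex_intro _ _ (ex_intro _ _ (conj Px erefl))).
by exists (cost y); split; [exists y | move=> z Pz; apply: y_min; exists z].
Qed.

Section Dimensions.
Variables (T : finType) (r : rel T).

Lemma adjacency_resolvingT : adjacency_resolving r [set: T].
Proof.
by move=> x y xy; exists x; [apply: in_setT | apply: dk1_id_neq].
Qed.

Lemma adim_exists : exists n, is_adim r n.
Proof. by apply: ex_min_cost; exists [set: T]; apply: adjacency_resolvingT. Qed.

Definition indicator_broadcast (A : {set T}) : {ffun T -> nat} :=
  [ffun v => nat_of_bool (v \in A)].

Lemma broadcast_cost_indicator A : broadcast_cost (indicator_broadcast A) = #|A|.
Proof.
rewrite /broadcast_cost -sum1_card [RHS]big_mkcond /=.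
by apply: eq_bigr => v _; rewrite ffunE; case: (v \in A).
Qed.

Lemma adjacency_resolving_broadcast A :
  adjacency_resolving r A -> resolving_broadcast r (indicator_broadcast A).
Proof.
move=> resA x y xy; have [z zA dz] := resA x y xy.
by exists z; rewrite ffunE zA.
Qed.

Lemma bdim_exists : exists n, is_bdim r n.
Proof.
apply: ex_min_cost; exists (indicator_broadcast [set: T]).
exact/adjacency_resolving_broadcast/adjacency_resolvingT.
Qed.

Lemma bdim_le_adim a b : is_adim r a -> is_bdim r b -> b <= a.
Proof.
move=> [[A [resA <-]] _] [_ b_min].
by rewrite -broadcast_cost_indicator; apply/b_min/adjacency_resolving_broadcast.
Qed.

End Dimensions.

Section CompleteGraph.
Variable T : finType.

Definition complete_rel : rel T := fun x y => x != y.

Lemma simple_graph_complete : simple_graph complete_rel.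
Proof. by split => [x y | x]; rewrite /complete_rel ?eqxx // eq_sym. Qed.

Lemma complete_broadcast_silent_uniq (f : {ffun T -> nat}) x y :
  resolving_broadcast complete_rel f -> f x = 0 -> f y = 0 -> x = y.
Proof.
move=> resf fx0 fy0; apply/eqP; apply: contraT => xy.
have [z [fz]] := resf x y xy.
have zx : z != x by apply: contraTneq fz => ->; rewrite fx0.
have zy : z != y by apply: contraTneq fz => ->; rewrite fy0.
by case: (f z) fz => [//|n] _; rewrite !dk_adj // eq_sym.
Qed.

Lemma bdim_complete : is_bdim complete_rel #|T|.-1.
Proof.
case: (pickP (@predT T)) => [t0 _ | T0]; last first.
  rewrite (eq_card0 T0); split=> [|f _ //]; exists [ffun=> 0]; split.
    by move=> x; have := T0 x.
  by rewrite /broadcast_cost big_pred0.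
split.
  exists [ffun v => nat_of_bool (v != t0)]; split.
    move=> x y xy; have [x0 | xt0] := eqVneq x t0.
      by exists y; rewrite ffunE -x0 eq_sym xy dk_id dk_adj // /complete_rel eq_sym.
    by exists x; rewrite ffunE xt0 dk_id dk_adj // eq_sym.
  rewrite /broadcast_cost -(cardC1 t0) -sum1_card [RHS]big_mkcond /=.
  by apply: eq_bigr => v _; rewrite ffunE.
move=> f resf; have [t ft0 | f_pos] := pickP (fun t => f t == 0); last first.
  rewrite -sum1_card /broadcast_cost (leq_trans (leq_pred _)) //.
  by apply: leq_sum => v _; rewrite lt0n f_pos.
rewrite -(cardC1 t) -sum1_card /broadcast_cost [leqRHS](bigD1 t) //= (eqP ft0).
apply: leq_sum => v vt; rewrite lt0n; apply: contra vt => /eqP fv0.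
exact/eqP/(complete_broadcast_silent_uniq resf fv0)/eqP.
Qed.

End CompleteGraph.

Arguments complete_rel {T}.

Section Tournaments.

Definition rank_lt (T : finType) : rel T := fun x y => enum_rank x < enum_rank y.

Lemma rank_lt_orientation (T : finType) : is_orientation complete_rel (@rank_lt T).
Proof.
rewrite /complete_rel /rank_lt; split=> x y.
- by apply: contraTneq => ->; rewrite ltnn.
- by rewrite -neq_ltn (inj_eq (@ord_inj _)) (inj_eq enum_rank_inj).
- by rewrite -leqNgt => /ltnW.
Qed.

Variables (A B : finType) (oA : rel A) (oB : rel B) (c : A -> B -> bool).

Definition sum_tournament : rel (A + B) := fun x y =>
  match x, y with
  | inl a, inl a' => oA a a'
  | inl a, inr b => c a b
  | inr b, inl a => ~~ c a b
  | inr b, inr b' => oB b b'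
  end.

Lemma sum_tournament_orientation :
  is_orientation complete_rel oA -> is_orientation complete_rel oB ->
  is_orientation complete_rel sum_tournament.
Proof.
move=> [oA_edge oA_tot oA_asym] [oB_edge oB_tot oB_asym].
split=> [[a|b] [a'|b'] | [a|b] [a'|b'] | [a|b] [a'|b'] ] //=.
- exact: oA_edge.
- exact: oB_edge.
- exact: oA_tot.
- by rewrite orbN.
- by rewrite orNb.
- exact: oB_tot.
- exact: oA_asym.
- by move=> ->.
- exact: oB_asym.
Qed.

End Tournaments.

Lemma set_neq_witness (T : finType) (X U : {set T}) : X != U -> exists i, (i \in X) != (i \in U).
Proof.
move=> XU; apply/existsP; apply: contraNT XU => /existsPn XU.
by apply/eqP/setP => i; apply/eqP; rewrite -[_ == _]negbK XU.
Qed.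

Section MembershipTournament.
Variable k : nat.

Definition membership_tournament : rel ('I_k + {set 'I_k}) :=
  sum_tournament (@rank_lt _) (@rank_lt _) (fun (i : 'I_k) (X : {set 'I_k}) => i \in X).

Lemma membership_tournament_orientation :
  is_orientation complete_rel membership_tournament.
Proof. exact/sum_tournament_orientation/rank_lt_orientation/rank_lt_orientation. Qed.

Definition ground_vertices : {set 'I_k + {set 'I_k}} := inl @: [set: 'I_k].

Lemma card_ground_vertices : #|ground_vertices| = k.
Proof. by rewrite card_imset ?cardsT ?card_ord //; apply: inl_inj. Qed.

Lemma ground_vertices_resolving :
  adjacency_resolving membership_tournament ground_vertices.
Proof.
have ground i : inl i \in ground_vertices by rewrite imset_f ?in_setT.
case=> [i|X] [j|U] xy.
- by exists (inl i); [apply: ground | apply: dk1_id_neq].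
- by exists (inl i); [apply: ground | apply: dk1_id_neq].
- by exists (inl j); [apply: ground | rewrite eq_sym dk1_id_neq // eq_sym].
- have [i iXU] := set_neq_witness xy.
  exists (inl i); first exact: ground.
  rewrite !dk1E /=.
  by move: iXU; case: (i \in X); case: (i \in U).
Qed.

End MembershipTournament.

Theorem theorem5p4 :
  forall k : nat, 0 < k ->
  exists (T : finType) (e o : rel T),
    [/\ simple_graph e, is_orientation e o &
      exists aG bG aO bO : nat,
        [/\ is_adim e aG, is_bdim e bG, is_adim o aO, is_bdim o bO &
          [/\ bG <= aG, bG = 2 ^ k + k - 1, aO <= k & bO <= aO]]].
Proof.
move=> k _; pose T : finType := ('I_k + {set 'I_k})%type.
exists T, complete_rel, (@membership_tournament k).
split; [exact: simple_graph_complete | exact: membership_tournament_orientation |].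
have [aG adimG] := adim_exists (@complete_rel T).
have [aO adimO] := adim_exists (@membership_tournament k).
have [bO bdimO] := bdim_exists (@membership_tournament k).
have bdimG := bdim_complete T.
exists aG, #|T|.-1, aO, bO; split=> //; split.
- exact: bdim_le_adim adimG bdimG.
- by rewrite card_sum card_ord -cardsT -powersetT card_powerset cardsT card_ord addnC subn1.
- by rewrite -(card_ground_vertices k); apply: adimO.2; apply: ground_vertices_resolving.
- exact: bdim_le_adim adimO bdimO.
Qed.
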